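(* Let $\Gamma$ be a Deza graph with parameters $(n,k,k-1,a)$, $k>1$, $\beta=1$. For an $NA$-vertex $x$, $x''=x$ (where $x''=(x')'$, which is defined since $x'$ is an $NA$-vertex).
   Context: A Deza graph with parameters $(n,k,b,a)$, $a\le b$, is a $k$-regular graph on $n$ vertices in which any two distinct vertices have $a$ or $b$ common neighbours; $\beta$ is the number of vertices $u\ne v$ with exactly $b$ common neighbours with a given vertex $v$. Since $\beta=1$, for each vertex $x$ let $x_b$ denote the unique vertex having $b=k-1$ common neighbours with $x$. A vertex $x$ is an $A$-vertex if $x$ is adjacent to $x_b$, and an $NA$-vertex otherwise. For an $NA$-vertex $x$, $x'$ denotes the unique neighbour of $x$ not adjacent to $x_b$; for an $NA$-vertex $x$ the vertex $x'$ is again an $NA$-vertex. *)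

From mathcomp Require Import all_boot.
Set Implicit Arguments. Unset Strict Implicit. Unset Printing Implicit Defensive.

Section Deza.
Variables (T : finType) (e : rel T).

Definition common (x y : T) : nat := #|[set z | e x z && e y z]|.

Definition deza_graph (n k b a : nat) : Prop :=
  #|T| = n /\ symmetric e /\ irreflexive e /\
  (forall x, #|[set y | e x y]| = k) /\
  (forall x y, x != y -> common x y = a \/ common x y = b) /\
  a <= b.

Definition beta (b : nat) (v : T) : nat := #|[set u | (u != v) && (common u v == b)]|.

(* x_b : the (unique, when beta = 1) vertex with b common neighbours with x *)
Definition xb (b : nat) (x : T) : T := odflt x [pick u | (u != x) && (common u x == b)].

Definition A_vertex (b : nat) (x : T) : bool := e x (xb b x).
Definition NA_vertex (b : nat) (x : T) : bool := ~~ e x (xb b x).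

Definition xprime (b : nat) (x : T) : T := odflt x [pick y | e x y && ~~ e y (xb b x)].

End Deza.

(** Counting the walks u - z - q - v in two ways gives
    [sum_(q ~ v) common u q = sum_(q ~ u) common v q].  In a Deza graph with
    b = k - 1 and beta = 1, [common u q] is k, k - 1 or a according as q is u,
    u_b or any other vertex, so the two sides are
    [a k + (k - a) [u ~ v] + (k - 1 - a) [u_b ~ v]] and the same with u, v
    exchanged.  Since beta = 1 and k > 1 force a < k - 1, adjacency to the
    b-partner is symmetric: u_b ~ v iff v_b ~ u.  As x and x_b share k - 1 of
    the k neighbours of x, x' is the only neighbour of x outside N(x_b).  For
    y = x', the vertex x is a neighbour of y, and it is not adjacent to y_b
    because x_b is not adjacent to y; hence y' = x. *)

From Pilot Require Import Defs.
From mathcomp Require Import all_boot zify.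

Set Implicit Arguments.
Unset Strict Implicit.
Unset Printing Implicit Defensive.

Section Common.
Variables (T : finType) (e : rel T).

Lemma commonC x y : common e x y = common e y x.
Proof. by apply: eq_card => z; rewrite !inE andbC. Qed.

Lemma commonE x y : common e x y = \sum_z e x z * e y z.
Proof.
rewrite /common -sum1_card big_mkcond /=.
by apply: eq_bigr => z _; rewrite inE; case: (e x z); case: (e y z).
Qed.

Hypothesis e_sym : symmetric e.

Lemma sum_adj_commonC u v :
  \sum_q e v q * common e u q = \sum_q e u q * common e v q.
Proof.
under eq_bigr do rewrite commonE big_distrr.
under [RHS]eq_bigr do rewrite commonE big_distrr.
rewrite exchange_big /=; apply: eq_bigr => q _; apply: eq_bigr => z _.
by rewrite (e_sym z q) mulnCA.
Qed.

End Common.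

Section DezaBeta1.
Variables (T : finType) (e : rel T) (k a : nat).
Hypothesis e_sym : symmetric e.
Hypothesis e_irr : irreflexive e.
Hypothesis e_reg : forall x, #|[set y | e x y]| = k.
Hypothesis common_ab :
  forall x y, x != y -> common e x y = a \/ common e x y = k.-1.
Hypothesis a_le : a <= k.-1.
Hypothesis k_gt1 : 1 < k.
Hypothesis beta1 : forall v, beta e k.-1 v = 1.

Local Notation xb := (xb e k.-1).
Local Notation xprime := (xprime e k.-1).

Lemma common_id x : common e x x = k.
Proof. by rewrite -(e_reg x); apply: eq_card => z; rewrite !inE andbb. Qed.

Lemma xbP u w : ((w != u) && (common e w u == k.-1)) = (w == xb u).
Proof.
have /eqP/cards1P [w0 Dw0] := beta1 u.
have Ew0 w' : ((w' != u) && (common e w' u == k.-1)) = (w' == w0).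
  by rewrite -[RHS]in_set1 -Dw0 inE.
suff -> : xb u = w0 by apply: Ew0.
rewrite /xb; case: pickP => [w' /= | none]; first by rewrite Ew0 => /eqP.
by have := none w0; rewrite Ew0 eqxx.
Qed.

Lemma xb_neq u : xb u != u.
Proof. by have /andP[] := etrans (xbP u (xb u)) (eqxx _). Qed.

Lemma common_xb u : common e (xb u) u = k.-1.
Proof. by have /andP[_ /eqP] := etrans (xbP u (xb u)) (eqxx _). Qed.

(* If a = k - 1 then every neighbour of x0 would be counted by beta x0 = 1. *)
Lemma a_lt (x0 : T) : a < k.-1.
Proof.
rewrite ltn_neqAle a_le andbT; apply/eqP => a_eq.
suff : #|[set y | e x0 y]| <= beta e k.-1 x0 by rewrite e_reg beta1; lia.
apply: subset_leq_card; apply/subsetP => y; rewrite !inE => x0y.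
have y_neq : y != x0 by apply: contraTneq x0y => ->; rewrite e_irr.
by rewrite y_neq; case: (common_ab y_neq) => ->; rewrite ?a_eq eqxx.
Qed.

Lemma commonE_xb u q :
  common e u q = a + (k - a) * (q == u) + (k.-1 - a) * (q == xb u).
Proof.
have u_neq : (u == xb u) = false by rewrite eq_sym (negbTE (xb_neq u)).
have := a_le; case: (eqVneq q u) => [-> | q_neq_u].
  by rewrite common_id u_neq; lia.
case: (eqVneq q (xb u)) => [-> | q_neq_xb].
  by rewrite commonC common_xb; lia.
rewrite commonC; case: (common_ab q_neq_u) => [-> | c_eq]; first by lia.
by move: q_neq_xb; rewrite -xbP q_neq_u c_eq eqxx.
Qed.

Lemma sum_adj_common u v :
  \sum_q e v q * common e u q = a * k + (k - a) * e v u + (k.-1 - a) * e v (xb u).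
Proof.
have sum_adj_eq c w : \sum_q e v q * (c * (q == w)) = c * e v w.
  rewrite (bigD1 w) //= eqxx muln1 big1 ?addn0 1?mulnC // => q /negbTE->.
  by rewrite !muln0.
have sum_adj : \sum_q e v q * a = a * k.
  rewrite -big_distrl /= mulnC -(e_reg v) -sum1_card [in RHS]big_mkcond /=.
  by congr (_ * _); apply: eq_bigr => q _; rewrite inE; case: (e v q).
under eq_bigr do rewrite commonE_xb !mulnDr.
by rewrite !big_split /= sum_adj !sum_adj_eq.
Qed.

Lemma adj_xbC u v : e (xb u) v = e (xb v) u.
Proof.
have := sum_adj_commonC e_sym u v; rewrite !sum_adj_common (e_sym v u).
rewrite (e_sym v (xb u)) (e_sym u (xb v)); have := a_lt u.
by case: (e (xb u) v); case: (e (xb v) u) => /=; lia.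
Qed.

Lemma card_adj_notin_xb y : #|[set t | e y t & ~~ e (xb y) t]| = 1.
Proof.
have := cardsID [set t | e (xb y) t] [set t | e y t].
have -> : [set t | e y t] :&: [set t | e (xb y) t] = [set t | e y t & e (xb y) t].
  by apply/setP => t; rewrite !inE.
have -> : [set t | e y t] :\: [set t | e (xb y) t] = [set t | e y t & ~~ e (xb y) t].
  by apply/setP => t; rewrite !inE andbC.
rewrite e_reg; have := common_xb y; rewrite commonC /common => ->; lia.
Qed.

Lemma xprimeP y z : (e y z && ~~ e (xb y) z) = (z == xprime y).
Proof.
have /eqP/cards1P [w Dw] := card_adj_notin_xb y.
have Ew z' : (e y z' && ~~ e (xb y) z') = (z' == w) by rewrite -[RHS]in_set1 -Dw inE.
suff -> : xprime y = w by apply: Ew.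
rewrite /Defs.xprime; case: pickP => [z' /= | none].
  by rewrite (e_sym z') Ew => /eqP.
by have := none w; rewrite (e_sym w) Ew eqxx.
Qed.

Lemma xprimeK : involutive xprime.
Proof.
move=> x; set y := xprime x; apply/eqP; rewrite eq_sym -xprimeP.
have /andP[xy not_xb_y] : e x y && ~~ e (xb x) y by rewrite xprimeP eqxx.
by rewrite e_sym xy -adj_xbC.
Qed.

End DezaBeta1.

Theorem lemma11 (T : finType) (e : rel T) (n k a : nat) :
  deza_graph e n k k.-1 a -> 1 < k ->
  (forall v : T, beta e k.-1 v = 1) ->
  forall x : T, NA_vertex e k.-1 x ->
  xprime e k.-1 (xprime e k.-1 x) = x.
Proof.
move=> [_ [e_sym [e_irr [e_reg [common_ab a_le]]]]] k_gt1 beta1 x _.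
exact: (xprimeK e_sym e_irr e_reg common_ab a_le k_gt1 beta1).
Qed.
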